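(* Let $M\ge2$ and let $w,h$ be positive integers with $w\cdot h<\frac N2+1-\log_M N$. Consider the shallow ConvNet with $w\times h$ convolutional receptive field, ReLU activation and average pooling, whose $y$-th score function is $$h_y(X)=\sum_{z=1}^Z a^y_z\,\frac1N\sum_{i=1}^N\max\Big\{0,\sum_{j=1}^{w\cdot h}\sum_{d=1}^M A^{z,i}_{d,j}\,f_{\theta_d}(\mathbf x_{\rho(j;i)})\Big\},$$ where terms with $\rho(j;i)$ out of bounds are omitted (zero padding). Then this network is not universal: for any templates $\mathbf x^{(1)},\dots,\mathbf x^{(M)}\in\mathbb R^s$ there exists a tensor $\mathcal A\in\mathbb R^{M\times\cdots\times M}$ of order $N$ such that $\mathcal A\neq\mathcal A(h_y)$ for every $Z$, every $f_{\theta_1},\dots,f_{\theta_M}\in\mathcal F$ and all weights $A^{z,i}\in\mathbb R^{M\times wh}$, $\mathbf a^y\in\mathbb R^Z$.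
   Context: Inputs are $X=(\mathbf x_1,\dots,\mathbf x_N)\in(\mathbb R^s)^N$, where the $N$ patches are located at the $N$ positions of a 2D spatial grid. For a position $i$ and $j\in[w\cdot h]$, $\rho(j;i)$ denotes the $j$-th position of the $w\times h$ spatial window around position $i$ (the $w\cdot h$ window positions are distinct; some may fall outside the grid). Representation functions come from a family $\mathcal F=\{f_\theta:\mathbb R^s\to\mathbb R:\theta\in\Theta\}$. For templates $\mathbf x^{(1)},\dots,\mathbf x^{(M)}\in\mathbb R^s$ the grid tensor of $h:(\mathbb R^s)^N\to\mathbb R$ is the order-$N$ tensor $\mathcal A(h)_{d_1,\dots,d_N}=h(\mathbf x^{(d_1)},\dots,\mathbf x^{(d_N)})$, $d_i\in[M]$. *)

From HB Require Import structures.
From mathcomp Require Import all_boot all_order all_algebra.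
From mathcomp Require Import all_classical all_reals all_analysis.
Set Implicit Arguments. Unset Strict Implicit. Unset Printing Implicit Defensive.
Import Order.TTheory GRing.Theory Num.Theory.
Local Open Scope ring_scope.

(* A window structure on N grid positions: [rho i j] is the j-th position
   (j < w*h) of the window around position i, or [None] if it falls outside
   the grid (zero padding). *)
Definition window (N wh : nat) := 'I_N -> 'I_wh -> option 'I_N.

Definition window_distinct (N wh : nat) (rho : window N wh) : Prop :=
  forall (i : 'I_N) (j j' : 'I_wh) (k : 'I_N),
    rho i j = Some k -> rho i j' = Some k -> j = j'.

Definition shallow_relu_score (R : realType) (s N M w h Z : nat)
  (rho : window N (w * h)) (f : 'I_M -> 'rV[R]_s -> R)
  (a : 'I_Z -> R) (A : 'I_Z -> 'I_N -> 'M[R]_(M, w * h))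
  (X : 'I_N -> 'rV[R]_s) : R :=
  \sum_(z < Z) a z * ((N%:R)^-1 *
    \sum_(i < N) Num.max 0
      (\sum_(j < w * h)
         match rho i j with
         | Some k => \sum_(d < M) A z i d j * f d (X k)
         | None => 0
         end)).

Definition grid_tensor (R : realType) (s N M : nat)
  (hf : ('I_N -> 'rV[R]_s) -> R) (tmpl : 'I_M -> 'rV[R]_s)
  : {ffun {ffun 'I_N -> 'I_M} -> R} :=
  [ffun d : {ffun 'I_N -> 'I_M} => hf (fun i => tmpl (d i))].

(* The score function evaluated on templates depends on the assignment
   d : [N] -> [M] only through the N local window patterns of d, each of
   which takes at most M^(wh) values.  Hence every grid tensor realised by
   the network lies in the span of the N * M^(wh) indicator tensors of
   "pattern p occurs at position i", while the space of all grid tensors has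
   dimension M^N; the hypothesis on wh makes N * M^(wh) < M^N. *)
From HB Require Import structures.
From mathcomp Require Import all_boot all_order all_algebra.
From mathcomp Require Import all_classical all_reals all_analysis.
From mathcomp Require Import lra.
Set Implicit Arguments. Unset Strict Implicit. Unset Printing Implicit Defensive.
Import Order.TTheory GRing.Theory Num.Theory.
Local Open Scope ring_scope.

Lemma muln_expn_lt_expn (R : realType) (N M wh : nat) :
  (0 < N)%N -> (1 < M)%N ->
  (wh%:R : R) < N%:R - ln (N%:R : R) / ln (M%:R : R) ->
  (N * M ^ wh < M ^ N)%N.
Proof.
move=> N0 M1 hwh.
have lnM_gt0 : 0 < ln (M%:R : R) by rewrite ln_gt0 // ltr1n.
have M0 : (0 < M)%N by apply: ltnW.
rewrite -(ltr_nat R) -ltr_ln ?posrE ?ltr0n ?muln_gt0 ?expn_gt0 ?N0 ?M0 //.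
rewrite natrM !natrX lnM ?posrE ?exprn_gt0 ?ltr0n // !lnXn ?ltr0n //.
by move: hwh; rewrite -(ltr_pM2r lnM_gt0) mulrBl divfK ?gt_eqF // !mulr_natl ltrBrDr addrC.
Qed.

Lemma exists_notin_vspace (F : fieldType) (vT : vectType F) (U : {vspace vT}) :
  (\dim U < \dim {:vT})%N -> exists v, v \notin U.
Proof.
move=> ltU; apply: contrapT => allU.
suff /dimvS : (fullv <= U)%VS by rewrite leqNgt ltU.
apply/subvP => v _; apply/negPn/negP => vU.
by apply: allU; exists v.
Qed.

Section LocalPatterns.

Variables (R : realType) (N M wh : nat) (rho : window N wh) (m0 : 'I_M).

Let grid := {ffun 'I_N -> 'I_M}.
Let pattern := {ffun 'I_wh -> 'I_M}.

(* Out-of-grid window positions are filled with the dummy value [m0]; the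
   score ignores them, so this only affects which pattern is recorded. *)
Definition window_pattern (i : 'I_N) (d : grid) : pattern :=
  [ffun j => if rho i j is Some k then d k else m0].

Definition pattern_indicator (p : 'I_N * pattern) : {ffun grid -> R^o} :=
  [ffun d => ((window_pattern p.1 d == p.2)%:R : R)].

Definition pattern_indicators : seq {ffun grid -> R^o} :=
  [seq pattern_indicator p | p <- enum {: 'I_N * pattern}].

Definition local_span : {vspace {ffun grid -> R^o}} := <<pattern_indicators>>%VS.

Lemma dim_local_span : (\dim local_span <= N * M ^ wh)%N.
Proof.
apply: leq_trans (dim_span _) _.
by rewrite size_map -cardE card_prod card_ffun !card_ord.
Qed.

Lemma dim_grid_tensors : \dim {: {ffun grid -> R^o}} = (M ^ N)%N.
Proof. by rewrite dimvf /dim /= muln1 card_ffun !card_ord. Qed.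

Lemma local_sum_in_local_span (g : 'I_N -> pattern -> R) :
  ([ffun d => \sum_(i < N) g i (window_pattern i d)] : {ffun grid -> R^o})
    \in local_span.
Proof.
have -> : [ffun d => \sum_(i < N) g i (window_pattern i d)] =
          \sum_(p : ('I_N * pattern)%type) g p.1 p.2 *: pattern_indicator p.
  apply/ffunP => d; rewrite !ffunE sum_ffunE; under [RHS]eq_bigr do rewrite !ffunE.
  transitivity (\sum_(i < N) \sum_(e : pattern)
                  g i e *: ((window_pattern i d == e)%:R : R^o)); last by rewrite pair_bigA.
  apply: eq_bigr => i _; rewrite (bigD1 (window_pattern i d)) //= big1.
    by rewrite eqxx addr0 [RHS]mulr1.
  by move=> e; rewrite eq_sym => /negbTE ->; rewrite [LHS]mulr0.
apply: memv_suml => p _; apply/memvZ/memv_span.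
by apply: map_f; rewrite mem_enum.
Qed.

End LocalPatterns.

Lemma grid_tensor_shallow_relu_in_local_span (R : realType) (s N M w h Z : nat)
    (rho : window N (w * h)) (m0 : 'I_M) (f : 'I_M -> 'rV[R]_s -> R)
    (a : 'I_Z -> R) (A : 'I_Z -> 'I_N -> 'M[R]_(M, w * h))
    (tmpl : 'I_M -> 'rV[R]_s) :
  (grid_tensor (shallow_relu_score rho f a A) tmpl : {ffun _ -> R^o})
    \in local_span R rho m0.
Proof.
pose g i (e : {ffun 'I_(w * h) -> 'I_M}) :=
  \sum_(z < Z) a z * ((N%:R)^-1 * Num.max 0 (\sum_(j < w * h)
     if rho i j is Some _ then \sum_(d < M) A z i d j * f d (tmpl (e j)) else 0)).
suff -> : grid_tensor (shallow_relu_score rho f a A) tmpl =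
          [ffun d => \sum_(i < N) g i (window_pattern rho m0 i d)].
  exact: local_sum_in_local_span.
apply/ffunP => d; rewrite !ffunE /shallow_relu_score exchange_big /=.
apply: eq_bigr => z _; rewrite !mulr_sumr; apply: eq_bigr => i _.
do 2 congr (_ * _); congr (Num.max 0 _); apply: eq_bigr => j _.
by rewrite ffunE; case: (rho i j).
Qed.

Theorem claim6 (R : realType) (s N M w h : nat)
  (Theta : Type) (fam : Theta -> 'rV[R]_s -> R)
  (rho : window N (w * h))
  (hrho : window_distinct rho)
  (hN : (2 <= N)%N) (hM : (2 <= M)%N) (hw : (0 < w)%N) (hh : (0 < h)%N)
  (hwh : ((w * h)%:R : R) < N%:R / 2 + 1 - ln (N%:R : R) / ln (M%:R : R)) :
  forall tmpl : 'I_M -> 'rV[R]_s,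
  exists T : {ffun {ffun 'I_N -> 'I_M} -> R},
    forall (Z : nat) (theta : 'I_M -> Theta) (a : 'I_Z -> R)
           (A : 'I_Z -> 'I_N -> 'M[R]_(M, w * h)),
      T <> grid_tensor (shallow_relu_score rho (fun d => fam (theta d)) a A) tmpl.
Proof.
move=> tmpl.
have m0 : 'I_M by exists 0%N; apply: leq_trans hM.
have count : (N * M ^ (w * h) < M ^ N)%N.
  have N2 : (2 : R) <= N%:R by rewrite ler_nat.
  apply: (@muln_expn_lt_expn R) => //; first exact: leq_trans hN.
  by move: hwh; lra.
have [|T notinT] := @exists_notin_vspace _ _ (local_span R rho m0).
  by rewrite dim_grid_tensors (leq_ltn_trans (dim_local_span R rho m0)).
exists T => Z theta a A eqT; move/negP: notinT; apply; rewrite eqT.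
exact: grid_tensor_shallow_relu_in_local_span.
Qed.
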